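(* Let $A\in\mathbb{R}^{M\times N}$, $M\ge N$, have SVD $A=U\Sigma V^T$ with $U=[u_1,\dots,u_M]$, $V=[v_1,\dots,v_N]$ orthogonal and $\Sigma=\mathrm{diag}\{\sigma_1,\dots,\sigma_N\}\in\mathbb{R}^{M\times N}$, let $\tau\ge0$ and $1\le m<N$. Let $U_m=[u_1,\dots,u_m]$, $V_m=[v_1,\dots,v_m]$, $P_m=[u_{m+1},\dots,u_M]$, $Q_m=[v_{m+1},\dots,v_N]$, $\Sigma_m'=P_m^TAQ_m=\mathrm{diag}\{\sigma_{m+1},\dots,\sigma_N\}\in\mathbb{R}^{(M-m)\times(N-m)}$, and $$B_m'=\begin{bmatrix}-\tau I_{M-m}&\Sigma_m'\\(\Sigma_m')^T&-\tau I_{N-m}\end{bmatrix}.$$ Let $\widetilde U_m\in\mathbb{R}^{M\times m}$, $\widetilde V_m\in\mathbb{R}^{N\times m}$ have orthonormal columns (the approximate left and right singular vectors $\tilde u_i=\widetilde Uc_i$, $\tilde v_i=\widetilde Vd_i$, $i=1,\dots,m$, obtained from the singular triplets $(\theta_i,c_i,d_i)$ of $H=\widetilde U^TA\widetilde V$ for orthonormal $\widetilde U\in\mathbb{R}^{M\times k}$, $\widetilde V\in\mathbb{R}^{N\times k}$, $k>m$), let $\widetilde P_m,\widetilde Q_m$ be such that $[\widetilde U_m,\widetilde P_m]$ and $[\widetilde V_m,\widetilde Q_m]$ are orthogonal, and $$\widetilde B_m'=\begin{bmatrix}-\tau I_{M-m}&\widetilde P_m^TA\widetilde Q_m\\ \widetilde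 Q_m^TA^T\widetilde P_m&-\tau I_{N-m}\end{bmatrix}.$$ Let $\Phi$ and $\Psi$ be the canonical angle matrices between $\mathcal{R}(\widetilde U_m)$ and $\mathcal{R}(U_m)$, and between $\mathcal{R}(\widetilde V_m)$ and $\mathcal{R}(V_m)$. Then there exists an orthogonal $Z\in\mathbb{R}^{(M+N-2m)\times(M+N-2m)}$ such that $$\|\widetilde B_m'-Z^TB_m'Z\|\le\|A\|\big(\|\sin\Phi\|+\|\sin\Psi\|\big)^2 .$$
   Context: $\mathcal{R}(\cdot)$ denotes column space and $\|\cdot\|$ the spectral norm. For subspaces spanned by orthonormal $X,Y\in\mathbb{R}^{n\times m}$, the canonical angle matrix $\Theta$ is diagonal with the canonical (principal) angles $\theta_i=\arccos$ of the singular values of $X^TY$; in particular $\|\sin\Phi\|=\|\widetilde P_m^TU_m\|$ and $\|\sin\Psi\|=\|\widetilde Q_m^TV_m\|$. *)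

From HB Require Import structures.
From mathcomp Require Import all_boot all_order all_algebra.
From mathcomp Require Import classical_sets reals.
Set Implicit Arguments. Unset Strict Implicit. Unset Printing Implicit Defensive.
Import Order.TTheory GRing.Theory Num.Theory.
Local Open Scope ring_scope.
Local Open Scope classical_set_scope.

Section Defs.
Variable R : realType.

Definition vnorm2 n (x : 'cV[R]_n) : R := Num.sqrt (\sum_i x i 0 ^+ 2).

Definition spnorm r c (A : 'M[R]_(r, c)) : R :=
  sup [set vnorm2 (A *m x) | x in [set x : 'cV[R]_c | vnorm2 x <= 1]].

Definition smin n (C : 'M[R]_n) : R :=
  inf [set vnorm2 (C *m x) | x in [set x : 'cV[R]_n | vnorm2 x = 1]].

Definition orth_sq_mx n (Q : 'M[R]_n) : Prop := Q^T *m Q = 1%:M.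

Definition orthonormal_cols r c (X : 'M[R]_(r, c)) : Prop := X^T *m X = 1%:M.

(* ||sin Theta|| for the canonical angle matrix Theta between R(X) and R(Y),
   X, Y orthonormal n x k: the canonical angles are theta_i = arccos sigma_i(X^T Y),
   so ||sin Theta|| = max_i sin theta_i = sqrt (1 - sigma_min(X^T Y)^2). *)
Definition sin_canon_norm n k (X Y : 'M[R]_(n, k)) : R :=
  Num.sqrt (1 - smin (X^T *m Y) ^+ 2).

Definition rect_diag r c (s : 'I_c -> R) : 'M[R]_(r, c) :=
  \matrix_(i, j) (if (i : nat) == (j : nat) then s j else 0).

End Defs.

(* Write A = U_m D_1 V_m^T + P_m D_2 Q_m^T, so that Sigma_m' = D_2, and let
   s = ||sin Phi||, t = ||sin Psi||.  Then
     P~^T A Q~ = (P~^T U_m) D_1 (V_m^T Q~) + X^T D_2 Y,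
   with X = P_m^T P~ and Y = Q_m^T Q~, ||P~^T U_m|| <= s and ||V_m^T Q~|| <= t.
   The singular values of X lie in [sqrt (1 - s^2), 1], so the orthogonal polar
   factor W_1 of X satisfies ||X - W_1|| <= 1 - sqrt (1 - s^2) <= s^2; likewise
   ||Y - W_2|| <= t^2.  For Z = diag (W_1, W_2) the difference B~' - Z^T B' Z is
   the antidiagonal dilation of E = P~^T A Q~ - W_1^T D_2 W_2, and comparing the
   two expressions factor by factor gives
     ||E|| <= ||A|| (s t + s^2 + t^2) <= ||A|| (s + t)^2. *)

From HB Require Import structures.
From mathcomp Require Import all_boot all_order all_algebra.
From mathcomp Require Import classical_sets reals.
From mathcomp Require Import complex ring lra zify.
Set Implicit Arguments. Unset Strict Implicit. Unset Printing Implicit Defensive.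
Import Order.TTheory GRing.Theory Num.Theory.
Local Open Scope ring_scope.

Section Euclid.
Variable R : realType.

Definition dot n (x y : 'cV[R]_n) : R := (x^T *m y) 0 0.

Definition sqnorm n (x : 'cV[R]_n) : R := dot x x.

Lemma dotE n (x y : 'cV[R]_n) : dot x y = \sum_i x i 0 * y i 0.
Proof. by rewrite /dot mxE; apply: eq_bigr => i _; rewrite mxE. Qed.

Lemma sqnormE n (x : 'cV[R]_n) : sqnorm x = \sum_i x i 0 ^+ 2.
Proof. by rewrite /sqnorm dotE; apply: eq_bigr => i _; rewrite expr2. Qed.

Lemma vnorm2E n (x : 'cV[R]_n) : vnorm2 x = Num.sqrt (sqnorm x).
Proof. by rewrite sqnormE. Qed.

Lemma sqnorm_ge0 n (x : 'cV[R]_n) : 0 <= sqnorm x.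
Proof. by rewrite sqnormE; apply: sumr_ge0 => i _; apply: sqr_ge0. Qed.

Lemma sqnorm_eq0 n (x : 'cV[R]_n) : (sqnorm x == 0) = (x == 0).
Proof.
apply/idP/eqP => [|->]; last by rewrite /sqnorm /dot mulmx0 mxE.
rewrite sqnormE psumr_eq0 => [/allP x0|i _]; last exact: sqr_ge0.
apply/matrixP => i j; rewrite ord1 mxE.
by have /(_ (mem_index_enum _)) := x0 i; rewrite sqrf_eq0 => /eqP.
Qed.

Lemma sqnorm_delta n (i : 'I_n) : sqnorm (delta_mx i 0) = 1.
Proof.
rewrite sqnormE (bigD1 i) //= big1 ?addr0 => [|j /negbTE ji].
  by rewrite mxE !eqxx expr1n.
by rewrite mxE ji expr0n.
Qed.

Lemma vnorm2_ge0 n (x : 'cV[R]_n) : 0 <= vnorm2 x.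
Proof. by rewrite vnorm2E sqrtr_ge0. Qed.

Lemma vnorm2_sqr n (x : 'cV[R]_n) : vnorm2 x ^+ 2 = sqnorm x.
Proof. by rewrite vnorm2E sqr_sqrtr // sqnorm_ge0. Qed.

Lemma vnorm2_gt0 n (x : 'cV[R]_n) : (0 < vnorm2 x) = (x != 0).
Proof.
by rewrite vnorm2E sqrtr_gt0 lt_def sqnorm_ge0 sqnorm_eq0 andbT.
Qed.

Lemma vnorm2_0 n : vnorm2 (0 : 'cV[R]_n) = 0.
Proof. by apply/eqP; rewrite eq_le vnorm2_ge0 andbT leNgt vnorm2_gt0 eqxx. Qed.

Lemma vnorm2_leM n k c (x : 'cV[R]_n) (y : 'cV[R]_k) : 0 <= c ->
  (vnorm2 x <= c * vnorm2 y) = (sqnorm x <= c ^+ 2 * sqnorm y).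
Proof.
move=> c0; rewrite -!vnorm2_sqr -exprMn.
by rewrite ler_pXn2r ?nnegrE ?mulr_ge0 ?vnorm2_ge0.
Qed.

Lemma dotC n (x y : 'cV[R]_n) : dot x y = dot y x.
Proof. by rewrite !dotE; apply: eq_bigr => i _; rewrite mulrC. Qed.

Lemma dotDr n (x y z : 'cV[R]_n) : dot x (y + z) = dot x y + dot x z.
Proof. by rewrite /dot mulmxDr mxE. Qed.

Lemma dotZr n a (x y : 'cV[R]_n) : dot x (a *: y) = a * dot x y.
Proof. by rewrite /dot -scalemxAr mxE. Qed.

Lemma dotNr n (x y : 'cV[R]_n) : dot x (- y) = - dot x y.
Proof. by rewrite -scaleN1r dotZr mulN1r. Qed.

Lemma dotDl n (x y z : 'cV[R]_n) : dot (y + z) x = dot y x + dot z x.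
Proof. by rewrite dotC dotDr !(dotC x). Qed.

Lemma dotZl n a (x y : 'cV[R]_n) : dot (a *: y) x = a * dot y x.
Proof. by rewrite dotC dotZr dotC. Qed.

Lemma dotNl n (x y : 'cV[R]_n) : dot (- y) x = - dot y x.
Proof. by rewrite dotC dotNr dotC. Qed.

Lemma dot_mulmxr r c (A : 'M[R]_(r, c)) x y : dot x (A *m y) = dot (A^T *m x) y.
Proof. by rewrite /dot trmx_mul trmxK mulmxA. Qed.

Lemma sqnormZ n a (x : 'cV[R]_n) : sqnorm (a *: x) = a ^+ 2 * sqnorm x.
Proof. by rewrite /sqnorm dotZl dotZr mulrA expr2. Qed.

Lemma vnorm2Z n a (x : 'cV[R]_n) : vnorm2 (a *: x) = `|a| * vnorm2 x.
Proof. by rewrite !vnorm2E sqnormZ sqrtrM ?sqr_ge0 // sqrtr_sqr. Qed.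

Lemma vnorm2_normalize n (x : 'cV[R]_n) : x != 0 -> vnorm2 ((vnorm2 x)^-1 *: x) = 1.
Proof.
rewrite -vnorm2_gt0 => xp.
by rewrite vnorm2Z ger0_norm ?invr_ge0 ?ltW // mulVf // gt_eqF.
Qed.

Lemma sqnorm_normalize n (x : 'cV[R]_n) : x != 0 -> sqnorm ((vnorm2 x)^-1 *: x) = 1.
Proof. by move/vnorm2_normalize; rewrite -vnorm2_sqr => ->; rewrite expr1n. Qed.

Lemma sqnorm_col a b (x : 'cV[R]_a) (y : 'cV[R]_b) :
  sqnorm (col_mx x y) = sqnorm x + sqnorm y.
Proof. by rewrite /sqnorm /dot tr_col_mx mul_row_col mxE. Qed.

Lemma sqnorm_isometry r c (M : 'M[R]_(r, c)) x :
  M^T *m M = 1%:M -> sqnorm (M *m x) = sqnorm x.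
Proof. by move=> MM; rewrite /sqnorm dot_mulmxr mulmxA MM mul1mx. Qed.

(* Cauchy-Schwarz, from the nonnegativity of [sqnorm (x - t y)] at the optimal [t]. *)
Lemma dot_sqr_le n (x y : 'cV[R]_n) : dot x y ^+ 2 <= sqnorm x * sqnorm y.
Proof.
have [->|yn0] := eqVneq y 0.
  by rewrite /dot mulmx0 mxE expr0n mulr_ge0 ?sqnorm_ge0.
have yp : 0 < sqnorm y by rewrite lt_def sqnorm_eq0 yn0 sqnorm_ge0.
pose t := dot x y / sqnorm y.
have : 0 <= sqnorm (x - t *: y) by apply: sqnorm_ge0.
have -> : sqnorm (x - t *: y) = sqnorm x - dot x y ^+ 2 / sqnorm y.
  rewrite {1}/sqnorm dotDl !dotDr !dotNr !dotNl !dotZl !dotZr (dotC y x).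
  rewrite -/(sqnorm x) -/(sqnorm y) /t; field; exact: lt0r_neq0.
by rewrite subr_ge0 ler_pdivrMr // mulrC.
Qed.

Lemma dot_le n (x y : 'cV[R]_n) : dot x y <= vnorm2 x * vnorm2 y.
Proof.
rewrite !vnorm2E -sqrtrM ?sqnorm_ge0 // (le_trans (ler_norm _)) //.
by rewrite -sqrtr_sqr ler_wsqrtr // dot_sqr_le.
Qed.

Lemma vnorm2D_le n (x y : 'cV[R]_n) : vnorm2 (x + y) <= vnorm2 x + vnorm2 y.
Proof.
rewrite vnorm2E -(ger0_norm (addr_ge0 (vnorm2_ge0 x) (vnorm2_ge0 y))).
rewrite -sqrtr_sqr ler_wsqrtr //.
rewrite /sqnorm dotDl !dotDr (dotC y x) -/(sqnorm x) -/(sqnorm y) -!vnorm2_sqr.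
have := dot_le x y; nra.
Qed.

Definition opnorm_le r c (A : 'M[R]_(r, c)) (k : R) : Prop :=
  forall x, vnorm2 (A *m x) <= k * vnorm2 x.

Lemma opnorm_le_trans r c (A : 'M[R]_(r, c)) a b :
  a <= b -> opnorm_le A a -> opnorm_le A b.
Proof. by move=> ab hA x; rewrite (le_trans (hA x)) // ler_wpM2r ?vnorm2_ge0. Qed.

Lemma opnorm_le_sqnorm r c (A : 'M[R]_(r, c)) a x : 0 <= a ->
  opnorm_le A a -> sqnorm (A *m x) <= a ^+ 2 * sqnorm x.
Proof. by move=> a0 /(_ x); rewrite vnorm2_leM. Qed.

Lemma opnorm_leD r c (A B : 'M[R]_(r, c)) a b :
  opnorm_le A a -> opnorm_le B b -> opnorm_le (A + B) (a + b).
Proof.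
move=> hA hB x; rewrite mulmxDl mulrDl.
by rewrite (le_trans (vnorm2D_le _ _)) // lerD.
Qed.

Lemma opnorm_leM r k c (A : 'M[R]_(r, k)) (B : 'M[R]_(k, c)) a b : 0 <= a ->
  opnorm_le A a -> opnorm_le B b -> opnorm_le (A *m B) (a * b).
Proof.
by move=> a0 hA hB x; rewrite -mulmxA -mulrA (le_trans (hA _)) // ler_wpM2l.
Qed.

Lemma opnorm_le_tr r c (A : 'M[R]_(r, c)) a : 0 <= a ->
  opnorm_le A a -> opnorm_le A^T a.
Proof.
move=> a0 hA x; have [->|ATx0] := eqVneq (A^T *m x) 0.
  by rewrite vnorm2_0 mulr_ge0 ?vnorm2_ge0.
rewrite -(ler_pM2r (_ : 0 < vnorm2 (A^T *m x))) ?vnorm2_gt0 //.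
rewrite -expr2 vnorm2_sqr /sqnorm -dot_mulmxr (le_trans (dot_le _ _)) //.
by rewrite [a * _]mulrC -mulrA ler_wpM2l ?vnorm2_ge0.
Qed.

Lemma opnorm_le_isometry r c (M : 'M[R]_(r, c)) :
  M^T *m M = 1%:M -> opnorm_le M 1.
Proof. by move=> MM x; rewrite vnorm2_leM // expr1n !mul1r sqnorm_isometry. Qed.

Lemma opnorm_le_coisometry r c (M : 'M[R]_(r, c)) :
  M^T *m M = 1%:M -> opnorm_le M^T 1.
Proof. by move=> MM; apply: opnorm_le_tr => //; apply: opnorm_le_isometry. Qed.

Lemma opnorm_le_cross r a b (K : 'M[R]_(r, a)) (L : 'M[R]_(r, b)) :
  orthonormal_cols K -> orthonormal_cols L -> opnorm_le (K^T *m L) 1.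
Proof.
move=> hK hL; rewrite -[1]mulr1.
exact: opnorm_leM ler01 (opnorm_le_coisometry hK) (opnorm_le_isometry hL).
Qed.

Lemma opnorm_le_antidiag a b (E : 'M[R]_(a, b)) e : 0 <= e ->
  opnorm_le E e -> opnorm_le (block_mx 0 E E^T 0) e.
Proof.
move=> e0 hE x; have hET := opnorm_le_tr e0 hE.
rewrite vnorm2_leM // -[x]vsubmxK mul_block_col.
rewrite !mul0mx !add0r !addr0 !sqnorm_col mulrDr addrC.
by rewrite lerD // opnorm_le_sqnorm.
Qed.

Lemma spnorm_has_ubound r c (A : 'M[R]_(r, c)) :
  has_ubound [set vnorm2 (A *m x) | x in [set x : 'cV[R]_c | vnorm2 x <= 1]].
Proof.
exists (Num.sqrt (\sum_i sqnorm (row i A)^T)) => _ [x /= x1 <-].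
rewrite vnorm2E ler_wsqrtr // sqnormE; apply: ler_sum => i _.
have -> : (A *m x) i 0 = dot (row i A)^T x by rewrite /dot trmxK -row_mul [RHS]mxE.
rewrite (le_trans (dot_sqr_le _ _)) // ler_piMr ?sqnorm_ge0 //.
by rewrite -vnorm2_sqr expr_le1 ?vnorm2_ge0.
Qed.

Lemma spnorm_opnorm_le r c (A : 'M[R]_(r, c)) : opnorm_le A (spnorm A).
Proof.
move=> x; have [->|xn0] := eqVneq x 0; first by rewrite mulmx0 !vnorm2_0 mulr0.
have xp : 0 < vnorm2 x by rewrite vnorm2_gt0.
have : vnorm2 (A *m ((vnorm2 x)^-1 *: x)) <= spnorm A.
  apply: (ub_le_sup (spnorm_has_ubound A)); exists ((vnorm2 x)^-1 *: x) => //=.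
  by rewrite vnorm2_normalize.
rewrite -scalemxAr vnorm2Z ger0_norm ?invr_ge0 ?vnorm2_ge0 //.
by move=> h; rewrite mulrC -ler_pdivrMl.
Qed.

Lemma spnorm_le r c (A : 'M[R]_(r, c)) k : 0 <= k -> opnorm_le A k -> spnorm A <= k.
Proof.
move=> k0 hA; apply: ge_sup; first by exists 0, 0; rewrite /= ?mulmx0 vnorm2_0.
by move=> _ [x /= x1 <-]; rewrite (le_trans (hA x)) // ler_piMr.
Qed.

Lemma spnorm_ge0 r c (A : 'M[R]_(r, c)) : 0 <= spnorm A.
Proof.
apply: le_trans (ub_le_sup (spnorm_has_ubound A) _); last by exists 0; rewrite //= vnorm2_0.
by rewrite mulmx0 vnorm2_0.
Qed.

Lemma smin_has_lbound n (C : 'M[R]_n) :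
  has_lbound [set vnorm2 (C *m x) | x in [set x : 'cV[R]_n | vnorm2 x = 1]].
Proof. by exists 0 => _ [x _ <-]; apply: vnorm2_ge0. Qed.

Lemma smin_mul_le n (C : 'M[R]_n) x : smin C * vnorm2 x <= vnorm2 (C *m x).
Proof.
have [->|xn0] := eqVneq x 0; first by rewrite mulmx0 !vnorm2_0 mulr0.
have xp : 0 < vnorm2 x by rewrite vnorm2_gt0.
have : smin C <= vnorm2 (C *m ((vnorm2 x)^-1 *: x)).
  apply: (ge_inf (smin_has_lbound C)); exists ((vnorm2 x)^-1 *: x) => //=.
  exact: vnorm2_normalize.
rewrite -scalemxAr vnorm2Z ger0_norm ?invr_ge0 ?vnorm2_ge0 //.
by rewrite ler_pdivlMl // mulrC.
Qed.

Lemma smin_ge0 n (C : 'M[R]_n) : (0 < n)%N -> 0 <= smin C.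
Proof.
move=> n0; pose e : 'cV[R]_n := delta_mx (Ordinal n0) 0.
apply: lb_le_inf; last by move=> _ [x _ <-]; apply: vnorm2_ge0.
by exists (vnorm2 (C *m e)), e; rewrite //= vnorm2E sqnorm_delta sqrtr1.
Qed.

Lemma smin_le n (C : 'M[R]_n) k : (0 < n)%N -> opnorm_le C k -> smin C <= k.
Proof.
move=> n0 hC; pose e : 'cV[R]_n := delta_mx (Ordinal n0) 0.
have e1 : vnorm2 e = 1 by rewrite vnorm2E sqnorm_delta sqrtr1.
by have := le_trans (smin_mul_le C e) (hC e); rewrite e1 !mulr1.
Qed.

Lemma smin_sqr_le n (C : 'M[R]_n) x : (0 < n)%N ->
  smin C ^+ 2 * sqnorm x <= sqnorm (C *m x).
Proof.
move=> n0; rewrite -!vnorm2_sqr -exprMn ler_pXn2r ?smin_mul_le //.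
  by rewrite nnegrE mulr_ge0 ?smin_ge0 ?vnorm2_ge0.
by rewrite nnegrE vnorm2_ge0.
Qed.

End Euclid.

Section SVD.
Variable R : realType.

(* Go through the complex spectral theorem: the hermitian matrix S has a real
   eigenvalue, which is then a root of the (real) characteristic polynomial of S. *)
Lemma symmetric_eigenvector n (S : 'M[R]_n.+1) : S^T = S ->
  exists (r : R) (v : 'cV[R]_n.+1), v != 0 /\ S *m v = r *: v.
Proof.
move=> Ssym; pose f := real_complex R; pose Sc := map_mx f S.
have Sch : Sc \is hermsymmx.
  apply: realsym_hermsym.
    by rewrite qualifE /= expr0 scale1r map_mx_id // /Sc map_trmx Ssym.
  by apply/mxOverP => i j; rewrite mxE; apply/complex_realP; exists (S i j).
have /orthomx_spectralP Seq := hermitian_normalmx Sch.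
set P := spectralmx Sc in Seq; set D := spectral_diag Sc in Seq.
have Pu : P \in unitmx by apply: spectral_unit.
have eigc : eigenvalue Sc (D 0 0).
  apply/eigenvalueP; exists (row 0 P).
    rewrite -row_mul (_ : P *m Sc = diag_mx D *m P); last first.
      by rewrite Seq !mulmxA mulmxV // mul1mx.
    by rewrite row_mul row_diag_mx -scalemxAl -rowE.
  apply/negP => /eqP/rowP r0; move: Pu; rewrite unitmxE unitfE.
  rewrite (expand_det_row _ 0) big1 ?eqxx // => j _.
  by have := r0 j; rewrite !mxE => ->; rewrite mul0r.
have [r Dr] : exists r, D 0 0 = f r.
  by apply/complex_realP; move/mxOverP: (hermitian_spectral_diag_real Sch); apply.
have : root (char_poly S) r.
  by move: eigc; rewrite Dr eigenvalue_root_char -map_char_poly fmorph_root.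
rewrite -eigenvalue_root_char => /eigenvalueP [w wS w0].
exists r, w^T; split; first by rewrite trmx_eq0.
by rewrite -Ssym -trmx_mul wS linearZ.
Qed.

Lemma orth_sq_mxM n (A B : 'M[R]_n) :
  orth_sq_mx A -> orth_sq_mx B -> orth_sq_mx (A *m B).
Proof.
by rewrite /orth_sq_mx => hA hB; rewrite trmx_mul mulmxA -(mulmxA B^T) hA mulmx1.
Qed.

Lemma orth_sq_mx_block a b (W1 : 'M[R]_a) (W2 : 'M[R]_b) :
  orth_sq_mx W1 -> orth_sq_mx W2 -> orth_sq_mx (block_mx W1 0 0 W2).
Proof.
rewrite /orth_sq_mx => hW1 hW2; rewrite tr_block_mx !trmx0 mulmx_block.
by rewrite !mulmx0 !mul0mx !addr0 !add0r hW1 hW2 -scalar_mx_block.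
Qed.

(* The Householder reflection [1 - 2 w w^T / |w|^2] with [w = u - e_0]. *)
Lemma reflection_to_unit n (u : 'cV[R]_n.+1) : sqnorm u = 1 ->
  exists H : 'M[R]_n.+1, orth_sq_mx H /\ H *m delta_mx 0 0 = u.
Proof.
move=> u1; set e : 'cV[R]_n.+1 := delta_mx 0 0.
have [<-|une] := eqVneq e u.
  by exists 1%:M; split; rewrite /orth_sq_mx ?trmx1 mul1mx.
set w := u - e; set s := sqnorm w.
have sp : 0 < s by rewrite lt_def sqnorm_eq0 subr_eq0 eq_sym une sqnorm_ge0.
have we : dot w e = - s / 2.
  have : s = sqnorm u - 2 * dot u e + sqnorm e.
    by rewrite /s /sqnorm /w dotDl !dotDr !dotNl !dotNr (dotC e u); ring.
  rewrite u1 sqnorm_delta => ->; rewrite /w dotDl dotNl -/(sqnorm e) sqnorm_delta.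
  by field.
have wwT x : w *m w^T *m x = dot w x *: w.
  rewrite -mulmxA (_ : w^T *m x = (dot w x)%:M) ?mul_mx_scalar //.
  by apply/matrixP => i j; rewrite !ord1 [RHS]mxE.
pose P := w *m w^T.
have PP : P *m P = s *: P by rewrite /P mulmxA wwT -scalemxAl.
have PT : P^T = P by rewrite /P trmx_mul trmxK.
exists (1%:M - (2 / s) *: P); split.
  rewrite /orth_sq_mx (_ : (_ - _)^T = 1%:M - (2 / s) *: P); last first.
    by rewrite raddfB /= linearZ /= tr_scalar_mx PT.
  rewrite mulmxBl !mulmxBr !mul1mx !mulmx1 -!scalemxAl -!scalemxAr PP !scalerA.
  rewrite -scalerBl -addrA -opprD -scalerDl.
  rewrite (_ : 2 / s + (2 / s - 2 / s * (2 / s) * s) = 0) ?scale0r ?subr0 //.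
  by field; rewrite gt_eqF.
rewrite mulmxBl mul1mx -scalemxAl /P wwT we scalerA.
rewrite (_ : 2 / s * (- s / 2) = -1); last by field; rewrite gt_eqF.
by rewrite scaleN1r opprK /w addrC subrK.
Qed.

Lemma singular_pair n (X : 'M[R]_n.+1) : exists (u v : 'cV[R]_n.+1) (sig : R),
  [/\ sqnorm u = 1, sqnorm v = 1, 0 <= sig, X *m v = sig *: u & X^T *m u = sig *: v].
Proof.
have XXsym : (X^T *m X)^T = X^T *m X by rewrite trmx_mul trmxK.
have [r [v0 [v0n0 Sv0]]] := symmetric_eigenvector XXsym.
pose v := (vnorm2 v0)^-1 *: v0.
have v1 : sqnorm v = 1 by apply: sqnorm_normalize.
have Sv : X^T *m X *m v = r *: v by rewrite -scalemxAr Sv0 !scalerA mulrC.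
have [Xv0|Xvn0] := eqVneq (X *m v) 0.
  have : X \notin unitmx.
    apply/negP => Xu; move: v1; rewrite -(mulKmx Xu v) Xv0 mulmx0.
    by rewrite /sqnorm /dot mulmx0 mxE => /eqP; rewrite eq_sym oner_eq0.
  rewrite -row_free_unit -kermx_eq0 => /rowV0Pn [w /sub_kermxP wX wn0].
  have wTn0 : w^T != 0 by rewrite trmx_eq0.
  exists ((vnorm2 w^T)^-1 *: w^T), v, 0; split => //; rewrite ?scale0r //.
    exact: sqnorm_normalize.
  by rewrite -scalemxAr -trmx_mul wX trmx0 scaler0.
have sp : 0 < vnorm2 (X *m v) by rewrite vnorm2_gt0.
exists ((vnorm2 (X *m v))^-1 *: (X *m v)), v, (vnorm2 (X *m v)); split => //.
- exact: sqnorm_normalize.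
- exact: ltW.
- by rewrite scalerA mulfV ?gt_eqF // scale1r.
have rE : r = vnorm2 (X *m v) ^+ 2.
  by rewrite vnorm2_sqr -[r]mulr1 -v1 /sqnorm -dotZr -Sv -mulmxA dot_mulmxr trmxK.
by rewrite -scalemxAr mulmxA Sv scalerA rE expr2 mulKf // gt_eqF.
Qed.

Lemma block_of_e0_eigen n (M : 'M[R]_(1 + n)) s :
  let e : 'cV_(1 + n) := delta_mx 0 0 in
  M *m e = s *: e -> M^T *m e = s *: e -> M = block_mx s%:M 0 0 (drsubmx M).
Proof.
move=> e /matrixP Me /matrixP MTe; rewrite -{1}[M]submxK.
have l0 : lshift n (0 : 'I_1) = 0 by apply: val_inj.
have r0 k : (rshift 1 k == 0 :> 'I_(1 + n)) = false by [].
congr block_mx; apply/matrixP => i j; rewrite !ord1 !mxE ?l0.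
- by have := Me 0 0; rewrite -colE !mxE !eqxx mulr1 => ->.
- by have := MTe (rshift 1 j) 0; rewrite -colE !mxE r0 mulr0.
- by have := Me (rshift 1 i) 0; rewrite -colE !mxE r0 mulr0.
Qed.

Lemma svd n (X : 'M[R]_n) : exists (P Q : 'M[R]_n) (d : 'rV[R]_n),
  [/\ orth_sq_mx P, orth_sq_mx Q, forall i, 0 <= d 0 i & X = P *m diag_mx d *m Q^T].
Proof.
elim: n X => [|n IH] X.
  exists 1%:M, 1%:M, 0; split; rewrite /orth_sq_mx ?trmx1 ?mul1mx //; first by case.
  by rewrite [X]thinmx0 [RHS]thinmx0.
have [u [v [sig [u1 v1 sig0 Xv XTu]]]] := singular_pair X.
have [Hu [Hu1 Hue]] := reflection_to_unit u1.
have [Hv [Hv1 Hve]] := reflection_to_unit v1.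
pose M : 'M_(1 + n) := Hu^T *m X *m Hv.
have XE : X = Hu *m M *m Hv^T.
  by rewrite /M !mulmxA (mulmx1C Hu1) mul1mx -mulmxA (mulmx1C Hv1) mulmx1.
have Mblk : M = block_mx sig%:M 0 0 (drsubmx M).
  apply: block_of_e0_eigen.
    by rewrite /M -!mulmxA Hve Xv -scalemxAr -Hue mulmxA Hu1 mul1mx.
  rewrite /M !trmx_mul trmxK -!mulmxA Hue mulmxA -mulmxA XTu -scalemxAr -Hve.
  by rewrite mulmxA Hv1 mul1mx.
have [P' [Q' [d' [P'1 Q'1 d'0 M'E]]]] := IH (drsubmx M).
have I1 : orth_sq_mx (1%:M : 'M[R]_1) by rewrite /orth_sq_mx trmx1 mul1mx.
exists (Hu *m block_mx (1%:M : 'M_1) 0 0 P'), (Hv *m block_mx (1%:M : 'M_1) 0 0 Q'),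
  (row_mx (sig%:M : 'rV_1) d'); split.
- exact: orth_sq_mxM Hu1 (orth_sq_mx_block I1 P'1).
- exact: orth_sq_mxM Hv1 (orth_sq_mx_block I1 Q'1).
- suff d_ge0 (i : 'I_(1 + n)) : 0 <= row_mx (sig%:M : 'rV_1) d' 0 i by [].
  by case: (split_ordP i) => k ->; rewrite ?row_mxEr // row_mxEl ord1 mxE mulr1n.
have key : block_mx (1%:M : 'M_1) 0 0 P' *m diag_mx (row_mx (sig%:M : 'rV_1) d')
    *m (block_mx (1%:M : 'M_1) 0 0 Q')^T = block_mx sig%:M 0 0 (drsubmx M).
  rewrite M'E diag_mx_row tr_block_mx !trmx0 trmx1 !mulmx_block.
  rewrite !mulmx0 !mul0mx !mulmx1 !mul1mx !addr0 !add0r ?mul0mx.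
  by congr block_mx; apply/matrixP => i j; rewrite !ord1 !mxE.
by rewrite XE {1}Mblk -key trmx_mul !mulmxA.
Qed.

(* With [X = P diag(d) Q^T], the bounds force [sqrt (1 - s^2) <= d_i <= 1], hence
   [|d_i - 1| <= 1 - d_i^2 <= s^2]; take [W = P Q^T]. *)
Lemma orth_near_bounded_below n (X : 'M[R]_n) s : 0 <= s -> opnorm_le X 1 ->
  (forall y, (1 - s ^+ 2) * sqnorm y <= sqnorm (X *m y)) ->
  exists W : 'M[R]_n, orth_sq_mx W /\ opnorm_le (X - W) (s ^+ 2).
Proof.
move=> s0 hX hlow; have [P [Q [d [P1 Q1 d0 XE]]]] := svd X.
have QT1 : orth_sq_mx Q^T by rewrite /orth_sq_mx trmxK mulmx1C.
have sqnorm_diag (e : 'rV_n) z : sqnorm (diag_mx e *m z) = \sum_i (e 0 i * z i 0) ^+ 2.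
  by rewrite sqnormE mul_diag_mx; apply: eq_bigr => i _; rewrite mxE.
exists (P *m Q^T); split; first exact: orth_sq_mxM.
have d_near1 i : (d 0 i - 1) ^+ 2 <= (s ^+ 2) ^+ 2.
  pose z : 'cV[R]_n := Q *m delta_mx i 0.
  have z1 : sqnorm z = 1 by rewrite sqnorm_isometry ?sqnorm_delta.
  have Xz : sqnorm (X *m z) = d 0 i ^+ 2.
    rewrite XE -!mulmxA sqnorm_isometry // (mulmxA Q^T) Q1 mul1mx sqnorm_diag.
    rewrite (bigD1 i) //= big1 ?addr0 => [|j /negbTE ji]; first by rewrite mxE !eqxx mulr1.
    by rewrite mxE ji mulr0 expr0n.
  have := hlow z; have := opnorm_le_sqnorm z ler01 hX.
  rewrite Xz z1 expr1n !mulr1; have := d0 i; nra.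
move=> y; rewrite vnorm2_leM ?sqr_ge0 // XE -mulmxA -mulmxBr -mulmxA.
rewrite sqnorm_isometry // -{2}[Q^T]mul1mx -mulmxBl -mulmxA.
have -> : diag_mx d - 1%:M = diag_mx (d - const_mx 1) by rewrite linearB /= diag_const_mx.
rewrite sqnorm_diag -(sqnorm_isometry y QT1) sqnormE mulr_sumr; apply: ler_sum => i _.
by rewrite !mxE exprMn ler_wpM2r ?sqr_ge0.
Qed.

End SVD.

Section Angles.
Variable R : realType.

Lemma orth_sq_mx_rowP a b (K : 'M[R]_(a + b, a)) (L : 'M[R]_(a + b, b)) :
  orth_sq_mx (row_mx K L) ->
  [/\ K^T *m K = 1%:M, K^T *m L = 0, L^T *m K = 0, L^T *m L = 1%:M &
      K *m K^T + L *m L^T = 1%:M].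
Proof.
move=> h; have := mulmx1C h; rewrite tr_row_mx mul_row_col => ->.
move: h; rewrite /orth_sq_mx tr_row_mx mul_col_row scalar_mx_block.
by case/eq_block_mx => -> -> -> ->.
Qed.

Lemma sqnorm_split r a b (K : 'M[R]_(r, a)) (L : 'M[R]_(r, b)) y :
  K *m K^T + L *m L^T = 1%:M -> sqnorm (K^T *m y) + sqnorm (L^T *m y) = sqnorm y.
Proof.
by move=> h; rewrite /sqnorm !dot_mulmxr !trmxK -dotDl !mulmxA -mulmxDl h mul1mx.
Qed.

Lemma sin_canon_norm_ge0 n k (X Y : 'M[R]_(n, k)) : 0 <= sin_canon_norm X Y.
Proof. exact: sqrtr_ge0. Qed.

Lemma opnorm_le_sin_canon m r k (Ut Um : 'M[R]_(r, m)) (Pt : 'M[R]_(r, k)) :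
  (0 < m)%N -> orthonormal_cols Ut -> orthonormal_cols Um ->
  Ut *m Ut^T + Pt *m Pt^T = 1%:M -> opnorm_le (Pt^T *m Um) (sin_canon_norm Ut Um).
Proof.
move=> m0 hUt hUm hsplit x; set c := smin (Ut^T *m Um).
have c0 : 0 <= c by apply: smin_ge0.
have c1 : c <= 1 by apply: smin_le => //; apply: opnorm_le_cross.
have sE : sin_canon_norm Ut Um ^+ 2 = 1 - c ^+ 2.
  by rewrite /sin_canon_norm sqr_sqrtr // subr_ge0 expr_le1.
rewrite vnorm2_leM ?sin_canon_norm_ge0 // sE.
have := sqnorm_split (Um *m x) hsplit; rewrite (sqnorm_isometry _ hUm).
have := smin_sqr_le (Ut^T *m Um) x m0; rewrite -/c -!mulmxA; nra.
Qed.

Lemma sqnorm_cross_ge r k m l (Pt : 'M[R]_(r, k)) (Um : 'M[R]_(r, m))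
    (Pm : 'M[R]_(r, l)) s y : orthonormal_cols Pt -> 0 <= s ->
  Um *m Um^T + Pm *m Pm^T = 1%:M -> opnorm_le (Pt^T *m Um) s ->
  (1 - s ^+ 2) * sqnorm y <= sqnorm (Pm^T *m Pt *m y).
Proof.
move=> hPt s0 hsplit hb.
have := sqnorm_split (Pt *m y) hsplit; rewrite (sqnorm_isometry _ hPt).
have := opnorm_le_sqnorm y s0 (opnorm_le_tr s0 hb).
rewrite trmx_mul trmxK -!mulmxA; nra.
Qed.

Lemma orth_near_cross m k (Ut Um : 'M[R]_(m + k, m)) (Pt Pm : 'M[R]_(m + k, k)) :
  (0 < m)%N -> orth_sq_mx (row_mx Ut Pt) -> orth_sq_mx (row_mx Um Pm) ->
  exists W : 'M[R]_k, orth_sq_mx W /\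
    opnorm_le (Pm^T *m Pt - W) (sin_canon_norm Ut Um ^+ 2).
Proof.
move=> m0 /orth_sq_mx_rowP [hUt _ _ hPt hUtsplit] /orth_sq_mx_rowP [hUm _ _ hPm hUsplit].
have s0 := sin_canon_norm_ge0 Ut Um.
apply: orth_near_bounded_below => // [|y]; first exact: opnorm_le_cross.
exact: sqnorm_cross_ge hPt s0 hUsplit (opnorm_le_sin_canon m0 hUt hUm hUtsplit).
Qed.

End Angles.

Section Perturbation.
Variable R : realType.

Lemma opnorm_le_compress r c a b (K : 'M[R]_(r, a)) (L : 'M[R]_(c, b)) A :
  orthonormal_cols K -> orthonormal_cols L -> opnorm_le (K^T *m A *m L) (spnorm A).
Proof.
move=> hK hL; rewrite -[spnorm A]mul1r -[X in opnorm_le _ X]mulr1.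
apply: opnorm_leM (opnorm_le_isometry hL); first by rewrite mul1r spnorm_ge0.
exact: opnorm_leM ler01 (opnorm_le_coisometry hK) (spnorm_opnorm_le A).
Qed.

Lemma compress_block_sum m k l (Um : 'M[R]_(m + k, m)) (Pm : 'M[R]_(m + k, k))
    (Vm : 'M[R]_(m + l, m)) (Qm : 'M[R]_(m + l, l)) (D1 : 'M[R]_m) (D2 : 'M[R]_(k, l)) :
  orth_sq_mx (row_mx Um Pm) -> orth_sq_mx (row_mx Vm Qm) ->
  let A := Um *m D1 *m Vm^T + Pm *m D2 *m Qm^T in
  Um^T *m A *m Vm = D1 /\ Pm^T *m A *m Qm = D2.
Proof.
move=> /orth_sq_mx_rowP [hUm hUmPm hPmUm hPm _] /orth_sq_mx_rowP [hVm _ _ hQm _] /=.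
rewrite !mulmxDr !mulmxDl !mulmxA hUm hUmPm hPmUm hPm !mul0mx addr0 add0r !mul1mx.
by rewrite -!mulmxA hVm hQm !mulmx1.
Qed.

Lemma tail_compression_approx m k l (A : 'M[R]_(m + k, m + l))
    (Ut Um : 'M[R]_(m + k, m)) (Pt Pm : 'M[R]_(m + k, k))
    (Vt Vm : 'M[R]_(m + l, m)) (Qt Qm : 'M[R]_(m + l, l))
    (D1 : 'M[R]_m) (D2 : 'M[R]_(k, l)) :
  (0 < m)%N -> orth_sq_mx (row_mx Ut Pt) -> orth_sq_mx (row_mx Um Pm) ->
  orth_sq_mx (row_mx Vt Qt) -> orth_sq_mx (row_mx Vm Qm) ->
  A = Um *m D1 *m Vm^T + Pm *m D2 *m Qm^T ->
  exists (W1 : 'M[R]_k) (W2 : 'M[R]_l), [/\ orth_sq_mx W1, orth_sq_mx W2 &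
    opnorm_le (Pt^T *m A *m Qt - W1^T *m D2 *m W2)
      (spnorm A * (sin_canon_norm Ut Um + sin_canon_norm Vt Vm) ^+ 2)].
Proof.
move=> m0 hUPt hUPm hVQt hVQm AE.
have [W1 [hW1 hX]] := orth_near_cross m0 hUPt hUPm.
have [W2 [hW2 hY]] := orth_near_cross m0 hVQt hVQm.
exists W1, W2; split => //.
have [hUt _ _ _ hUtsplit] := orth_sq_mx_rowP hUPt.
have [hUm _ _ hPm _] := orth_sq_mx_rowP hUPm.
have [hVt _ _ hQt hVtsplit] := orth_sq_mx_rowP hVQt.
have [hVm _ _ hQm _] := orth_sq_mx_rowP hVQm.
set s := sin_canon_norm Ut Um in hX *; set t := sin_canon_norm Vt Vm in hY *.
have s0 : 0 <= s := sin_canon_norm_ge0 Ut Um.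
have t0 : 0 <= t := sin_canon_norm_ge0 Vt Vm.
set a := spnorm A; have a0 : 0 <= a := spnorm_ge0 A.
have [D1E D2E] := compress_block_sum D1 D2 hUPm hVQm; rewrite -AE in D1E D2E.
have hD1 : opnorm_le D1 a by rewrite -D1E; apply: opnorm_le_compress.
have hD2 : opnorm_le D2 a by rewrite -D2E; apply: opnorm_le_compress.
have hS : opnorm_le (Pt^T *m Um) s := opnorm_le_sin_canon m0 hUt hUm hUtsplit.
have hT : opnorm_le (Vm^T *m Qt) t.
  have := opnorm_le_tr t0 (opnorm_le_sin_canon m0 hVt hVm hVtsplit).
  by rewrite trmx_mul trmxK.
have hXT : opnorm_le ((Pm^T *m Pt)^T - W1^T) (s ^+ 2).
  by rewrite -raddfB; apply: opnorm_le_tr; rewrite ?sqr_ge0.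
have hY1 : opnorm_le (Qm^T *m Qt) 1 by apply: opnorm_le_cross.
have -> : Pt^T *m A *m Qt - W1^T *m D2 *m W2 =
    Pt^T *m Um *m D1 *m (Vm^T *m Qt)
    + ((Pm^T *m Pt)^T - W1^T) *m D2 *m (Qm^T *m Qt)
    + W1^T *m D2 *m (Qm^T *m Qt - W2).
  rewrite AE mulmxDr mulmxDl !mulmxBl !mulmxBr trmx_mul trmxK !mulmxA.
  by rewrite -!addrA addKr.
have h1 := opnorm_leM (mulr_ge0 s0 a0) (opnorm_leM s0 hS hD1) hT.
have h2 := opnorm_leM (mulr_ge0 (sqr_ge0 s) a0) (opnorm_leM (sqr_ge0 s) hXT hD2) hY1.
have h3 := opnorm_leM (mulr_ge0 ler01 a0) (opnorm_leM ler01 (opnorm_le_coisometry hW1) hD2) hY.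
apply: opnorm_le_trans (opnorm_leD (opnorm_leD h1 h2) h3).
have : 0 <= a * s * t by rewrite !mulr_ge0.
nra.
Qed.

Lemma rect_diag_block m p q (sigma : 'I_(m + q) -> R) :
  let D := rect_diag (m + p) sigma in D = block_mx (ulsubmx D) 0 0 (drsubmx D).
Proof.
move=> D; rewrite -{1}[D]submxK; congr block_mx; apply/matrixP => i j; rewrite !mxE /=.
  by case: eqP => // h; have := ltn_ord i; lia.
by case: eqP => // h; have := ltn_ord j; lia.
Qed.

Lemma dilation_sub_conj p q (tau : R) (F S : 'M[R]_(p, q)) (W1 : 'M[R]_p) (W2 : 'M[R]_q) :
  orth_sq_mx W1 -> orth_sq_mx W2 ->
  let Z := block_mx W1 0 0 W2 in
  block_mx (- tau%:M) F F^T (- tau%:M) - Z^T *m block_mx (- tau%:M) S S^T (- tau%:M) *m Z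
    = block_mx 0 (F - W1^T *m S *m W2) (F - W1^T *m S *m W2)^T 0.
Proof.
move=> hW1 hW2 Z; rewrite /Z tr_block_mx !trmx0 !mulmx_block !mulmx0 !mul0mx !addr0 !add0r.
rewrite !mulmxN !mulNmx !mul_mx_scalar -!scalemxAl hW1 hW2 !scalemx1.
rewrite opp_block_mx add_block_mx !subrr; congr block_mx.
by rewrite raddfB /= !trmx_mul !trmxK !mulmxA.
Qed.

End Perturbation.

Theorem theorem4p3 (R : realType) (m p q : nat)
  (Hm : (1 <= m)%N) (Hq : (1 <= q)%N) (Hqp : (q <= p)%N)
  (A : 'M[R]_(m + p, m + q))
  (U : 'M[R]_(m + p)) (V : 'M[R]_(m + q)) (sigma : 'I_(m + q) -> R)
  (HU : orth_sq_mx U) (HV : orth_sq_mx V)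
  (Hsig0 : forall j, 0 <= sigma j)
  (Hsigdec : forall i j : 'I_(m + q), (i <= j)%N -> sigma j <= sigma i)
  (HA : A = U *m rect_diag (m + p) sigma *m V^T)
  (tau : R) (Htau : 0 <= tau)
  (Ut : 'M[R]_(m + p, m)) (Vt : 'M[R]_(m + q, m))
  (Pt : 'M[R]_(m + p, p)) (Qt : 'M[R]_(m + q, q))
  (HUt : orthonormal_cols Ut) (HVt : orthonormal_cols Vt)
  (HUPt : orth_sq_mx (row_mx Ut Pt)) (HVQt : orth_sq_mx (row_mx Vt Qt)) :
  let Um : 'M[R]_(m + p, m) := lsubmx U in
  let Pm : 'M[R]_(m + p, p) := rsubmx U in
  let Vm : 'M[R]_(m + q, m) := lsubmx V in
  let Qm : 'M[R]_(m + q, q) := rsubmx V in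
  let Sig' : 'M[R]_(p, q) := Pm^T *m A *m Qm in
  let B' : 'M[R]_(p + q) :=
    block_mx (- tau%:M) Sig' Sig'^T (- tau%:M) in
  let Bt' : 'M[R]_(p + q) :=
    block_mx (- tau%:M) (Pt^T *m A *m Qt) (Qt^T *m A^T *m Pt) (- tau%:M) in
  exists Z : 'M[R]_(p + q), orth_sq_mx Z /\
    spnorm (Bt' - Z^T *m B' *m Z)
      <= spnorm A * (sin_canon_norm Ut Um + sin_canon_norm Vt Vm) ^+ 2.
Proof.
move=> Um Pm Vm Qm Sig' B' Bt'.
have HUPm : orth_sq_mx (row_mx Um Pm) by rewrite hsubmxK.
have HVQm : orth_sq_mx (row_mx Vm Qm) by rewrite hsubmxK.
set D := rect_diag (m + p) sigma.
have AE : A = Um *m ulsubmx D *m Vm^T + Pm *m drsubmx D *m Qm^T.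
  rewrite HA -[U]hsubmxK -[V]hsubmxK {1}(rect_diag_block p sigma) tr_row_mx.
  by rewrite mul_row_block !mulmx0 ?mul0mx !addr0 !add0r mul_row_col.
have [W1 [W2 [hW1 hW2 hE]]] := tail_compression_approx Hm HUPt HUPm HVQt HVQm AE.
have [_ Sig'E] := compress_block_sum (ulsubmx D) (drsubmx D) HUPm HVQm.
rewrite -AE in Sig'E.
exists (block_mx W1 0 0 W2); split; first exact: orth_sq_mx_block.
rewrite /Bt' /B' /Sig' Sig'E.
have -> : Qt^T *m A^T *m Pt = (Pt^T *m A *m Qt)^T by rewrite !trmx_mul trmxK !mulmxA.
rewrite dilation_sub_conj //.
have bound_ge0 : 0 <= spnorm A * (sin_canon_norm Ut Um + sin_canon_norm Vt Vm) ^+ 2.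
  by rewrite mulr_ge0 ?spnorm_ge0 ?sqr_ge0.
exact: spnorm_le bound_ge0 (opnorm_le_antidiag bound_ge0 hE).
Qed.
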